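(* Let $\theta$ and $\rho$ be regular infinite cardinals with $\theta < \rho < \kappa$, and let $J$ be a $\kappa$-complete ideal on $\kappa$ with $NS_\kappa|E^\kappa_\theta \subseteq J$. Suppose that there is no descending $(J, I_\kappa)$-tower of length $\mathfrak{b}_\kappa$. Let $A \in J^+ \cap P(E^\kappa_\theta \cap acc(E^\kappa_{\geq\rho}))$, and let $c_\alpha \subseteq E^\kappa_{\geq\rho}\cap\alpha$ for $\alpha \in A$ be such that $\sup c_\alpha = \alpha$ and $\mathrm{o.t.}(c_\alpha) = \theta$ for every $\alpha \in A$, and $\{\alpha \in A : c_\alpha \subseteq C\} \in J^+$ for every closed unbounded $C \subseteq \kappa$. Then there is $B \in J^+ \cap P(A)$ such that $\{\alpha \in A : \exists\beta < \alpha\,(c_\alpha \setminus \beta \subseteq C)\} \in (J|B)^*$ for every closed unbounded $C \subseteq \kappa$.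
   Context: $\kappa$ is a regular uncountable cardinal. An ideal on $\kappa$ is a nonempty $J \subseteq P(\kappa)$ with $\kappa \notin J$, every bounded subset of $\kappa$ in $J$, $J$ closed under subsets and under unions of two members; $J^+ = P(\kappa)\setminus J$; for $B \in J^+$, $J|B = \{X \subseteq \kappa : X \cap B \in J\}$ and $(J|B)^* = \{X \subseteq\kappa : \kappa\setminus X \in J|B\}$; $\kappa$-complete means closed under unions of fewer than $\kappa$ members. $I_\kappa$ is the ideal of bounded subsets of $\kappa$. $acc(X) = \{\alpha \in \kappa\setminus\{0\} : \sup(X\cap\alpha)=\alpha\}$; $E^\kappa_\theta = \{\alpha \in acc(\kappa) : \mathrm{cf}(\alpha)=\theta\}$; $E^\kappa_{\geq\rho} = \{\alpha \in acc(\kappa) : \mathrm{cf}(\alpha)\geq\rho\}$; $NS_\kappa|E^\kappa_\theta = \{X : X\cap E^\kappa_\theta \text{ nonstationary}\}$. $\mathfrak{b}_\kappa$ is the least cardinality of an $F \subseteq {}^\kappa\kappa$ with no $g \in {}^\kappa\kappa$ such that $|\{\alpha : f(\alpha) \ge g(\alpha)\}| < \kappa$ for all $f \in F$. For $Y \subseteq P(\kappa)$, a descending $(J,Y)$-tower of length $\delta$ is $\langle A_\alpha : \alpha<\delta\rangle$ with each $A_\alpha \in J^+$ such that for $\alpha<\beta<\delta$: $A_\beta\setminus A_\alpha \in Y$ and $A_\alpha\setminus A_\beta \in J^+$. *)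

(* Ordinals below kappa are the elements of a type K equipped
   with a strict well-order [lt]; kappa itself is the order type of K.
   Subsets of kappa are predicates K -> Prop. *)
From Stdlib Require Import Classical.

Section Defs.
Variable K : Type.
Variable lt : K -> K -> Prop.

Definition card_le (A B : Type) : Prop := exists f : A -> B, forall x y, f x = f y -> x = y.
Definition card_lt (A B : Type) : Prop := card_le A B /\ ~ card_le B A.

Definition strict_well_order {D : Type} (r : D -> D -> Prop) : Prop :=
  (forall x, ~ r x x) /\ (forall x y z, r x y -> r y z -> r x z) /\
  (forall x y, r x y \/ x = y \/ r y x) /\ well_founded r.

Definition seg (a : K) : K -> Prop := fun x => lt x a.

Definition bounded (X : K -> Prop) : Prop := exists b, forall x, X x -> lt x b.

Definition regular_uncountable_cardinal : Prop :=
  (forall a : K, card_lt {x | lt x a} K) /\        (* initial ordinal *)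
  ~ card_le K nat /\
  (forall X : K -> Prop, ~ bounded X -> card_le K {x | X x}). (* regular *)

Definition ideal (J : (K -> Prop) -> Prop) : Prop :=
  (exists X, J X) /\
  ~ J (fun _ => True) /\
  (forall X, bounded X -> J X) /\
  (forall X Y, (forall x, X x -> Y x) -> J Y -> J X) /\
  (forall X Y, J X -> J Y -> J (fun x => X x \/ Y x)).

Definition kappa_complete (J : (K -> Prop) -> Prop) : Prop :=
  forall (I : Type) (F : I -> K -> Prop), card_lt I K -> (forall i, J (F i)) ->
    J (fun x => exists i, F i x).

Definition restrict (J : (K -> Prop) -> Prop) (B : K -> Prop) : (K -> Prop) -> Prop :=
  fun X => J (fun x => X x /\ B x).
Definition dual_restrict (J : (K -> Prop) -> Prop) (B : K -> Prop) : (K -> Prop) -> Prop :=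
  fun X => restrict J B (fun x => ~ X x).

Definition acc (X : K -> Prop) : K -> Prop :=
  fun a => (exists b, lt b a) /\ forall b, lt b a -> exists x, X x /\ lt b x /\ lt x a.

Definition club (C : K -> Prop) : Prop :=
  (forall b, exists x, C x /\ lt b x) /\ (forall a, acc C a -> C a).

Definition nonstationary (Y : K -> Prop) : Prop :=
  exists C, club C /\ forall x, C x -> ~ Y x.

Definition ord_iso (X Y : K -> Prop) : Prop :=
  exists f : K -> K, (forall x, X x -> Y (f x)) /\
    (forall y, Y y -> exists x, X x /\ f x = y) /\
    (forall x y, X x -> X y -> lt x y -> lt (f x) (f y)).

Definition order_type (X : K -> Prop) (g : K) : Prop := ord_iso X (seg g).

Definition cofinal_in (X : K -> Prop) (a : K) : Prop :=
  (forall x, X x -> lt x a) /\ forall b, lt b a -> exists x, X x /\ ~ lt x b.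

Definition cof (a g : K) : Prop :=
  (exists X, cofinal_in X a /\ order_type X g) /\
  forall g', (exists X, cofinal_in X a /\ order_type X g') -> ~ lt g' g.

Definition regular_infinite_cardinal (t : K) : Prop :=
  card_le nat {x | lt x t} /\ cof t t.

Definition E_eq (t : K) : K -> Prop := fun a => acc (fun _ => True) a /\ cof a t.
Definition E_ge (r : K) : K -> Prop :=
  fun a => acc (fun _ => True) a /\ exists g, cof a g /\ ~ lt g r.

Definition NS_restr_sub (t : K) (J : (K -> Prop) -> Prop) : Prop :=
  forall X, nonstationary (fun x => X x /\ E_eq t x) -> J X.

Definition unbounded_family (F : (K -> K) -> Prop) : Prop :=
  ~ exists g : K -> K, forall f, F f -> card_lt {a | ~ lt (f a) (g a)} K.

(* (D, ltD) is (the well-order of) the ordinal b_kappa: it is an initial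
   ordinal whose cardinality is the least cardinality of an unbounded family *)
Definition is_b_kappa (D : Type) (ltD : D -> D -> Prop) : Prop :=
  strict_well_order ltD /\
  (forall d : D, card_lt {e | ltD e d} D) /\
  (exists F, unbounded_family F /\ card_le D {f | F f} /\ card_le {f | F f} D) /\
  (forall F, unbounded_family F -> card_le D {f | F f}).

Definition desc_tower (J Y : (K -> Prop) -> Prop) (D : Type) (ltD : D -> D -> Prop)
  (A : D -> K -> Prop) : Prop :=
  (forall d, ~ J (A d)) /\
  forall d e, ltD d e ->
    Y (fun x => A e x /\ ~ A d x) /\ ~ J (fun x => A d x /\ ~ A e x).

End Defs.

(* Suppose no B works.  Write T(C) for the set of a in A such that a tail of c_a lies in
   the club C; then every J-positive B included in A is split by some club C, in the sense
   that B minus T(C) is J-positive.  By recursion on e < b_kappa build clubs C_e such that for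
   d < e, T(C_e) minus T(C_d) is bounded and T(C_d) minus T(C_e) is J-positive, i.e. a
   descending (J, I_kappa)-tower of length b_kappa.  At stage e the fewer than b_kappa
   functions "next point of C_d above x" are eventually dominated by a single g, so the club
   G of closure points of g is almost contained in every earlier C_d; C_e is then G cut down
   by a club splitting T(G).
   Only the positivity of T(C) for clubs C is used about c. *)

From mathcomp Require Import eqtype boolp.
From mathcomp Require wochoice.
From Stdlib Require Import Classical ClassicalEpsilon FunctionalExtensionality ProofIrrelevance Wellfounded.

Lemma sig_ext (A : Type) (P : A -> Prop) (x y : {a | P a}) : proj1_sig x = proj1_sig y -> x = y.
Proof. apply eq_sig_hprop; intros; apply proof_irrelevance. Qed.

Lemma card_le_rel {A B : Type} (P : A -> B -> Prop) :
  (forall a, exists b, P a b) -> (forall a a' b, P a b -> P a' b -> a = a') -> card_le A B.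
Proof.
  intros Hex Hinj.
  exists (fun a => proj1_sig (constructive_indefinite_description _ (Hex a))).
  intros x y Exy. apply (Hinj x y (proj1_sig (constructive_indefinite_description _ (Hex x)))).
  - exact (proj2_sig _).
  - rewrite Exy. exact (proj2_sig _).
Qed.

Lemma card_le_trans {A B C : Type} : card_le A B -> card_le B C -> card_le A C.
Proof. intros [f Hf] [g Hg]. exists (fun a => g (f a)). auto. Qed.

Lemma card_le_subset {A : Type} (P Q : A -> Prop) :
  (forall x, P x -> Q x) -> card_le {x | P x} {x | Q x}.
Proof.
  intros HPQ. apply (card_le_rel (fun x y => proj1_sig x = proj1_sig y)).
  - intros [x Px]. exists (exist _ x (HPQ x Px)). reflexivity.
  - intros x x' y E E'. apply sig_ext. congruence.
Qed.

Lemma card_le_proj1 {A : Type} (P : A -> Prop) : card_le {x | P x} A.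
Proof. exists (@proj1_sig _ _). apply sig_ext. Qed.

Lemma card_le_full {A : Type} (P : A -> Prop) : (forall x, P x) -> card_le A {x | P x}.
Proof.
  intros HP. exists (fun a => exist _ a (HP a)).
  intros x y E. exact (f_equal (@proj1_sig _ _) E).
Qed.

Lemma card_le_image {A B : Type} (P : A -> Prop) (f : A -> B) :
  card_le {y | exists x, P x /\ y = f x} {x | P x}.
Proof.
  apply (card_le_rel (fun y x => proj1_sig y = f (proj1_sig x))).
  - intros [y [x [Px ->]]]. exists (exist _ x Px). reflexivity.
  - intros y y' x E E'. apply sig_ext. congruence.
Qed.

Section StrictWellOrder.
Context {D : Type} {R : D -> D -> Prop} (HR : strict_well_order R).

Lemma swo_irrefl x : ~ R x x.
Proof. exact (proj1 HR x). Qed.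

Lemma swo_trans x y z : R x y -> R y z -> R x z.
Proof. exact (proj1 (proj2 HR) x y z). Qed.

Lemma swo_trich x y : R x y \/ x = y \/ R y x.
Proof. exact (proj1 (proj2 (proj2 HR)) x y). Qed.

Lemma swo_wf : well_founded R.
Proof. exact (proj2 (proj2 (proj2 HR))). Qed.

Lemma swo_min (P : D -> Prop) : (exists x, P x) -> exists m, P m /\ forall y, R y m -> ~ P y.
Proof.
  intros [x Px]. apply NNPP; intros Hno. revert Px.
  induction (swo_wf x) as [x _ IH]. intros Px.
  apply Hno. exists x. split; [exact Px|]. exact IH.
Qed.

Lemma swo_le_lt x y z : ~ R y x -> R y z -> R x z.
Proof.
  intros Hyx Hyz. destruct (swo_trich x y) as [Hxy|[->|Hyx']].
  - exact (swo_trans _ _ _ Hxy Hyz).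
  - exact Hyz.
  - contradiction.
Qed.

Lemma swo_lt_le x y z : R x y -> ~ R z y -> R x z.
Proof.
  intros Hxy Hzy. destruct (swo_trich y z) as [Hyz|[<-|Hzy']].
  - exact (swo_trans _ _ _ Hxy Hyz).
  - exact Hxy.
  - contradiction.
Qed.

Lemma swo_max2 x y : exists m, (m = x \/ m = y) /\ ~ R m x /\ ~ R m y.
Proof.
  destruct (swo_trich x y) as [Hxy|[->|Hyx]].
  - exists y. split; [right; reflexivity|]. split; [|apply swo_irrefl].
    intros Hyx. exact (swo_irrefl _ (swo_trans _ _ _ Hxy Hyx)).
  - exists y. split; [left; reflexivity|]. split; apply swo_irrefl.
  - exists x. split; [left; reflexivity|]. split; [apply swo_irrefl|].
    intros Hxy. exact (swo_irrefl _ (swo_trans _ _ _ Hxy Hyx)).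
Qed.

Lemma swo_sig (P : D -> Prop) :
  strict_well_order (fun d e : {x | P x} => R (proj1_sig d) (proj1_sig e)).
Proof.
  split; [|split; [|split]].
  - intros d. apply swo_irrefl.
  - intros d e f. apply swo_trans.
  - intros d e. destruct (swo_trich (proj1_sig d) (proj1_sig e)) as [H|[H|H]]; auto.
    right; left. apply sig_ext. exact H.
  - apply (wf_inverse_image _ _ R (@proj1_sig _ _)), swo_wf.
Qed.

End StrictWellOrder.

Lemma exists_strict_well_order (T : Type) : exists W : T -> T -> Prop, strict_well_order W.
Proof.
  destruct (wochoice.well_ordering_principle {classic T}) as [R HR].
  assert (Hmin : forall P : T -> Prop, (exists x, P x) -> exists z, P z /\ forall y, P y -> R z y = true).
  { intros P [x Px].
    destruct (HR (fun y => asbool (P y))) as [z [[Pz Hz] _]].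
    { exists x. exact (asboolT Px). }
    exists z. split; [exact (asboolW Pz)|].
    intros y Py. exact (Hz y (asboolT Py)). }
  assert (Hanti : forall x y, R x y = true -> R y x = true -> x = y).
  { intros x y Hxy Hyx.
    apply (wochoice.wo_chain_antisymmetric (C := fun _ : {classic T} => true) (fun A _ => HR A));
      try reflexivity.
    rewrite Hxy, Hyx. reflexivity. }
  exists (fun x y => R x y = true /\ x <> y). split; [|split; [|split]].
  - intros x [_ Hxx]. exact (Hxx Logic.eq_refl).
  - intros x y z [Hxy Nxy] [Hyz Nyz].
    destruct (Hmin (fun w => w = x \/ w = y \/ w = z)) as [m [Hm Hmin3]]; [eauto|].
    destruct Hm as [-> | [-> | ->]].
    + split; [apply Hmin3; auto|]. intros <-. exact (Nxy (Hanti _ _ Hxy Hyz)).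
    + exfalso. exact (Nxy (Hanti _ _ Hxy (Hmin3 x (or_introl Logic.eq_refl)))).
    + exfalso. exact (Nyz (Hanti _ _ Hyz (Hmin3 y (or_intror (or_introl Logic.eq_refl))))).
  - intros x y. destruct (classic (x = y)) as [E|E]; [right; left; exact E|].
    destruct (Hmin (fun w => w = x \/ w = y)) as [m [[-> | ->] Hm]]; [eauto| |].
    + left. split; [apply Hm; auto | exact E].
    + right; right. split; [apply Hm; auto | intros ->; exact (E Logic.eq_refl)].
  - intros x. apply NNPP; intros Hx.
    destruct (Hmin (fun z => ~ Acc (fun x y => R x y = true /\ x <> y) z)) as [m [Hm Hmm]]; [eauto|].
    apply Hm. constructor. intros y [Hym Nym]. apply NNPP; intros Hy.
    exact (Nym (Hanti _ _ Hym (Hmm y Hy))).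
Qed.

Lemma wf_choice {D X : Type} {R : D -> D -> Prop} (wf : well_founded R) (x0 : X)
  (Adm : (D -> X) -> D -> X -> Prop) :
  (forall r r' e, (forall d, R d e -> r d = r' d) -> forall x, Adm r e x -> Adm r' e x) ->
  (forall r e, exists x, Adm r e x) ->
  exists F : D -> X, forall e, Adm F e (F e).
Proof.
  intros Hloc Hex.
  pose (extend := fun e (h : forall d, R d e -> X) d =>
    match excluded_middle_informative (R d e) with left H => h d H | right _ => x0 end).
  pose (step := fun e h => epsilon (inhabits x0) (Adm (extend e h) e)).
  pose (F := Fix wf (fun _ => X) step).
  exists F. intros e.
  assert (HF : F e = step e (fun d _ => F d)).
  { unfold F at 1. rewrite Fix_eq; [reflexivity|].
    intros x h h' Hhh'. unfold step.
    replace (extend x h') with (extend x h); [reflexivity|].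
    apply functional_extensionality; intros d. unfold extend.
    destruct (excluded_middle_informative (R d x)); auto. }
  rewrite HF. apply (Hloc (extend e (fun d _ => F d))).
  - intros d Hd. unfold extend. destruct (excluded_middle_informative (R d e)); [reflexivity|contradiction].
  - apply epsilon_spec, Hex.
Qed.

Section GreedyEnumeration.
Context {T U : Type} (W : T -> T -> Prop) (G : U -> Prop) (HW : strict_well_order W).

(* Enumerate G along W; [None] at x means that G is already exhausted below x. *)
Definition greedy_step (r : T -> option U) (x : T) (v : option U) : Prop :=
  match v with
  | Some f => G f /\ forall y, W y x -> r y <> Some f
  | None => forall f, G f -> exists y, W y x /\ r y = Some f
  end.

Lemma greedy_enumeration : exists s : T -> option U,
  (forall x f, s x = Some f -> G f) /\
  (forall x y f, s x = Some f -> s y = Some f -> x = y) /\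
  (forall x, s x = None -> card_le {f | G f} {y | W y x}).
Proof.
  destruct (wf_choice (swo_wf HW) None greedy_step) as [s Hs].
  - intros r r' x Hrr [f|] Hv; simpl in *.
    + destruct Hv as [Gf Hf]. split; [exact Gf|].
      intros y Hy. rewrite <- (Hrr y Hy). exact (Hf y Hy).
    + intros f Gf. destruct (Hv f Gf) as [y [Hy E]].
      exists y. rewrite <- (Hrr y Hy). auto.
  - intros r x.
    destruct (classic (exists f, G f /\ forall y, W y x -> r y <> Some f)) as [[f Hf]|Hnone].
    + exists (Some f). exact Hf.
    + exists None. intros f Gf. apply NNPP; intros Hn.
      apply Hnone. exists f. split; [exact Gf|]. intros y Hy E. eauto.
  - assert (Hinj : forall x y f, s x = Some f -> s y = Some f -> x = y).
    { intros x y f Ex Ey. pose proof (Hs x) as Hx. pose proof (Hs y) as Hy.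
      rewrite Ex in Hx. rewrite Ey in Hy. simpl in Hx, Hy.
      destruct (swo_trich HW x y) as [H|[H|H]].
      - exfalso. exact (proj2 Hy x H Ex).
      - exact H.
      - exfalso. exact (proj2 Hx y H Ey). }
    exists s. split; [|split; [exact Hinj|]].
    + intros x f E. pose proof (Hs x) as Hx. rewrite E in Hx. exact (proj1 Hx).
    + intros x E. pose proof (Hs x) as Hx. rewrite E in Hx. simpl in Hx.
      apply (card_le_rel (fun f y => s (proj1_sig y) = Some (proj1_sig f))).
      * intros [f Gf]. destruct (Hx f Gf) as [y [Hy E']]. exists (exist _ y Hy). exact E'.
      * intros f f' y E1 E2. apply sig_ext. congruence.
Qed.

End GreedyEnumeration.

Section BKappaExists.
Variables (K : Type) (lt : K -> K -> Prop).
Hypothesis Hirr : forall x, ~ lt x x.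

Lemma all_functions_unbounded : unbounded_family K lt (fun _ => True).
Proof.
  intros [g Hg]. apply (proj2 (Hg g I)). apply card_le_full. intros a. apply Hirr.
Qed.

Variable W : (K -> K) -> (K -> K) -> Prop.
Hypothesis HW : strict_well_order W.

(* The candidates form an initial segment of W of order type b_kappa. *)
Definition b_candidate (x : K -> K) : Prop :=
  forall G, unbounded_family K lt G -> ~ card_le {f | G f} {y | W y x}.

Lemma card_le_b_candidate G : unbounded_family K lt G -> card_le {x | b_candidate x} {f | G f}.
Proof.
  intros HG. destruct (greedy_enumeration W G HW) as [s [HsG [Hsinj HsNone]]].
  apply (card_le_rel (fun x f => s (proj1_sig x) = Some (proj1_sig f))).
  - intros [x Hx]. simpl. destruct (s x) as [f|] eqn:E.
    + exists (exist _ f (HsG x f E)). reflexivity.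
    + exfalso. exact (Hx G HG (HsNone x E)).
  - intros x x' f E1 E2. apply sig_ext. exact (Hsinj _ _ _ E1 E2).
Qed.

Lemma b_candidate_witness :
  exists G0, unbounded_family K lt G0 /\ card_le {f | G0 f} {x | b_candidate x}.
Proof.
  destruct (classic (forall x, b_candidate x)) as [Hall|Hnall].
  - exists (fun _ => True). split; [exact all_functions_unbounded|].
    exact (card_le_trans (card_le_proj1 _) (card_le_full _ Hall)).
  - apply not_all_ex_not in Hnall.
    destruct (swo_min HW _ Hnall) as [x1 [Hx1 Hbelow]].
    apply not_all_ex_not in Hx1. destruct Hx1 as [G HG].
    apply imply_to_and in HG. destruct HG as [HGunb HGle]. apply NNPP in HGle.
    exists G. split; [exact HGunb|]. apply (card_le_trans HGle).
    apply card_le_subset. intros y Hy. exact (NNPP _ (Hbelow y Hy)).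
Qed.

Lemma b_candidates_is_b_kappa :
  is_b_kappa K lt {x | b_candidate x} (fun d e => W (proj1_sig d) (proj1_sig e)).
Proof.
  destruct b_candidate_witness as [G0 [HG0 HG0le]].
  split; [exact (swo_sig HW _)|split; [|split]].
  - intros d. split; [exact (card_le_proj1 _)|]. intros Hle.
    apply (proj2_sig d G0 HG0).
    apply (card_le_trans HG0le), (card_le_trans Hle).
    apply (card_le_rel (fun e y => proj1_sig (proj1_sig e) = proj1_sig y)).
    + intros [e He]. exists (exist _ (proj1_sig e) He). reflexivity.
    + intros e e' y E1 E2. apply sig_ext, sig_ext. congruence.
  - exists G0. split; [exact HG0|]. split; [exact (card_le_b_candidate G0 HG0)|exact HG0le].
  - exact card_le_b_candidate.
Qed.

End BKappaExists.

Lemma b_kappa_exists (K : Type) (lt : K -> K -> Prop) :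
  (forall x, ~ lt x x) -> exists (D : Type) (ltD : D -> D -> Prop), is_b_kappa K lt D ltD.
Proof.
  intros Hirr. destruct (exists_strict_well_order (K -> K)) as [W HW].
  exists {x | b_candidate K lt W x}, (fun d e => W (proj1_sig d) (proj1_sig e)).
  exact (b_candidates_is_b_kappa K lt Hirr W HW).
Qed.

Section RegularCardinal.
Variables (K : Type) (lt : K -> K -> Prop).
Hypotheses (Hwo : strict_well_order lt) (Hk : regular_uncountable_cardinal K lt).

Lemma small_bounded (X : K -> Prop) : ~ card_le K {x | X x} -> bounded K lt X.
Proof. intros Hsmall. apply NNPP; intros Hunb. exact (Hsmall (proj2 (proj2 Hk) X Hunb)). Qed.

Lemma seg_image_bounded (b : K) (g : K -> K) :
  bounded K lt (fun y => exists x, lt x b /\ y = g x).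
Proof.
  apply small_bounded; intros Hle. apply (proj2 (proj1 Hk b)).
  exact (card_le_trans Hle (card_le_image _ g)).
Qed.

Lemma seq_bounded (s : nat -> K) : bounded K lt (fun y => exists n, y = s n).
Proof.
  apply small_bounded; intros Hle. apply (proj1 (proj2 Hk)).
  apply (card_le_trans Hle). apply (card_le_trans (B := {y | exists n, True /\ y = s n})).
  - apply card_le_subset. intros y [n E]. exists n. split; [exact I|exact E].
  - exact (card_le_trans (card_le_image _ s) (card_le_proj1 _)).
Qed.

Lemma no_max (x : K) : exists y, lt x y.
Proof.
  destruct (seq_bounded (fun _ => x)) as [y Hy]. exists y. apply Hy. exists 0. reflexivity.
Qed.

Lemma seq_sup (s : nat -> K) :
  exists a, (forall n, lt (s n) a) /\ forall x, lt x a -> exists n, ~ lt (s n) x.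
Proof.
  destruct (swo_min Hwo (fun y => forall n, lt (s n) y)) as [a [Ha Hleast]].
  { destruct (seq_bounded s) as [b Hb]. exists b. intros n. apply Hb. exists n. reflexivity. }
  exists a. split; [exact Ha|]. intros x Hx. exact (not_all_ex_not _ _ (Hleast x Hx)).
Qed.

Lemma acc_mono (X Y : K -> Prop) (a : K) :
  (forall x, X x -> Y x) -> acc K lt X a -> acc K lt Y a.
Proof.
  intros HXY [Hpos Hcof]. split; [exact Hpos|].
  intros b Hb. destruct (Hcof b Hb) as [x [Xx Hx]]. exists x. split; [exact (HXY x Xx)|exact Hx].
Qed.

Definition closure_points (g : K -> K) (a : K) : Prop :=
  acc K lt (fun _ => True) a /\ forall x, lt x a -> lt (g x) a.

Lemma closure_step (g : K -> K) (z : K) : exists u, lt z u /\ forall x, lt x z -> lt (g x) u.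
Proof.
  destruct (seg_image_bounded z g) as [b Hb].
  destruct (swo_max2 Hwo b z) as [m [_ [Hmb Hmz]]].
  destruct (no_max m) as [u Hu].
  exists u. split; [exact (swo_le_lt Hwo _ _ _ Hmz Hu)|].
  intros x Hx. apply (swo_trans Hwo _ b); [apply Hb; exists x; auto|].
  exact (swo_le_lt Hwo _ _ _ Hmb Hu).
Qed.

Lemma closure_points_unbounded (g : K -> K) (b : K) : exists a, closure_points g a /\ lt b a.
Proof.
  destruct (choice _ (closure_step g)) as [jump Hjump].
  pose (s := fun n => nat_rect (fun _ => K) b (fun _ z => jump z) n).
  destruct (seq_sup s) as [a [Hsa Hsup]].
  assert (Hbelow : forall x, lt x a -> exists n, lt x (s n)).
  { intros x Hx. destruct (Hsup x Hx) as [n Hn]. exists (S n).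
    exact (swo_le_lt Hwo _ _ _ Hn (proj1 (Hjump (s n)))). }
  exists a. split; [split; [split|]|exact (Hsa 0)].
  - exists b. exact (Hsa 0).
  - intros x Hx. destruct (Hbelow x Hx) as [n Hn]. exists (s n). auto.
  - intros x Hx. destruct (Hbelow x Hx) as [n Hn].
    exact (swo_trans Hwo _ _ _ (proj2 (Hjump (s n)) x Hn) (Hsa (S n))).
Qed.

Lemma closure_points_closed (g : K -> K) (a : K) :
  acc K lt (closure_points g) a -> closure_points g a.
Proof.
  intros Hacc. split; [exact (acc_mono _ _ a (fun _ _ => I) Hacc)|].
  intros x Hx. destruct (proj2 Hacc x Hx) as [y [[_ Hy] [Hxy Hya]]].
  exact (swo_trans Hwo _ _ _ (Hy x Hxy) Hya).
Qed.

Lemma club_closure_points (g : K -> K) : club K lt (closure_points g).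
Proof.
  split; [|exact (closure_points_closed g)].
  intros b. destruct (closure_points_unbounded g b) as [a [Ha Hba]]. eauto.
Qed.

Lemma closure_points_sub (C : K -> Prop) (g : K -> K) (beta : K) :
  club K lt C -> (forall y, ~ lt y beta -> exists z, C z /\ lt y z /\ lt z (g y)) ->
  forall a, closure_points g a -> lt beta a -> C a.
Proof.
  intros [_ HCcl] Hg a [[Hpos _] Hga] Hba. apply HCcl. split; [exact Hpos|].
  intros b Hb. destruct (swo_max2 Hwo b beta) as [m [Hm [Hmb Hmbeta]]].
  assert (Hma : lt m a) by (destruct Hm; subst; assumption).
  destruct (Hg m Hmbeta) as [z [Cz [Hmz Hzg]]].
  exists z. split; [exact Cz|]. split.
  - exact (swo_le_lt Hwo _ _ _ Hmb Hmz).
  - exact (swo_trans Hwo _ _ _ Hzg (Hga m Hma)).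
Qed.

Lemma club_inter (P Q : K -> Prop) :
  club K lt P -> club K lt Q -> club K lt (fun a => P a /\ Q a).
Proof.
  intros HP HQ.
  assert (Hjump : forall x, exists u,
    (exists y, P y /\ lt x y /\ lt y u) /\ (exists y, Q y /\ lt x y /\ lt y u)).
  { intros x. destruct (proj1 HP x) as [p [Pp Hxp]]. destruct (proj1 HQ x) as [q [Qq Hxq]].
    destruct (swo_max2 Hwo p q) as [m [_ [Hmp Hmq]]]. destruct (no_max m) as [u Hu].
    exists u. split.
    - exists p. split; [exact Pp|split; [exact Hxp|exact (swo_le_lt Hwo _ _ _ Hmp Hu)]].
    - exists q. split; [exact Qq|split; [exact Hxq|exact (swo_le_lt Hwo _ _ _ Hmq Hu)]]. }
  destruct (choice _ Hjump) as [g Hg].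
  split.
  - intros b. destruct (closure_points_unbounded g b) as [a [Ha Hba]].
    exists a. split; [split|exact Hba].
    + apply (closure_points_sub P g b HP); auto. intros y _. exact (proj1 (Hg y)).
    + apply (closure_points_sub Q g b HQ); auto. intros y _. exact (proj2 (Hg y)).
  - intros a Ha. split.
    + apply (proj2 HP). exact (acc_mono _ _ a (fun x H => proj1 H) Ha).
    + apply (proj2 HQ). exact (acc_mono _ _ a (fun x H => proj2 H) Ha).
Qed.

Definition point_above (C : K -> Prop) (x : K) : K :=
  epsilon (inhabits x) (fun y => C y /\ lt x y).

Lemma point_above_spec (C : K -> Prop) (x : K) :
  club K lt C -> C (point_above C x) /\ lt x (point_above C x).
Proof. intros HC. exact (epsilon_spec (inhabits x) (fun y => C y /\ lt x y) (proj1 HC x)). Qed.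

Lemma closure_points_eventually_sub (C : K -> Prop) (g : K -> K) :
  club K lt C -> bounded K lt (fun x => ~ lt (point_above C x) (g x)) ->
  exists beta, forall a, closure_points g a -> lt beta a -> C a.
Proof.
  intros HC [beta Hbeta]. exists beta. apply (closure_points_sub C g beta HC).
  intros y Hy. exists (point_above C y).
  destruct (point_above_spec C y HC) as [HCy Hya].
  split; [exact HCy|split; [exact Hya|]].
  apply NNPP. intros Hn. exact (Hy (Hbeta y Hn)).
Qed.

Lemma dominating_function (D : Type) (ltD : D -> D -> Prop) (f : D -> K -> K) (e : D) :
  is_b_kappa K lt D ltD ->
  exists g : K -> K, forall d, ltD d e -> bounded K lt (fun x => ~ lt (f d x) (g x)).
Proof.
  intros [_ [Hseg [_ Hleast]]].
  pose (Fam := fun h => exists d, ltD d e /\ h = f d).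
  assert (Hfew : ~ unbounded_family K lt Fam).
  { intros Hunb. apply (proj2 (Hseg e)).
    exact (card_le_trans (Hleast Fam Hunb) (card_le_image _ f)). }
  apply NNPP in Hfew. destruct Hfew as [g Hg].
  exists g. intros d Hd. apply small_bounded.
  exact (proj2 (Hg (f d) (ex_intro _ d (conj Hd (Logic.eq_refl _))))).
Qed.

End RegularCardinal.

Section Ideal.
Variables (K : Type) (lt : K -> K -> Prop) (J : (K -> Prop) -> Prop).
Hypothesis HJ : ideal K lt J.

Lemma ideal_mono (X Y : K -> Prop) : (forall x, X x -> Y x) -> J Y -> J X.
Proof. exact (proj1 (proj2 (proj2 (proj2 HJ))) X Y). Qed.

Lemma ideal_pos_diff (X Y Z : K -> Prop) :
  ~ J (fun a => X a /\ ~ Z a) -> bounded K lt (fun a => X a /\ ~ Y a) ->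
  ~ J (fun a => Y a /\ ~ Z a).
Proof.
  intros HXZ HXY HYZ. apply HXZ.
  apply (ideal_mono _ (fun a => (Y a /\ ~ Z a) \/ (X a /\ ~ Y a))).
  - intros a [Xa Za]. destruct (classic (Y a)); [left|right]; auto.
  - apply (proj2 (proj2 (proj2 (proj2 HJ)))); [exact HYZ|].
    exact (proj1 (proj2 (proj2 HJ)) _ HXY).
Qed.

End Ideal.

Section Tower.
Variables (K : Type) (lt : K -> K -> Prop).
Hypotheses (Hwo : strict_well_order lt) (Hk : regular_uncountable_cardinal K lt).
Variables (J : (K -> Prop) -> Prop) (A : K -> Prop) (c : K -> K -> Prop).
Hypothesis HJ : ideal K lt J.
Hypothesis Hlim : forall a, A a -> acc K lt (fun _ => True) a.
Hypothesis Hc_club : forall C, club K lt C -> ~ J (fun a => A a /\ forall x, c a x -> C x).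

Definition tails_in (C : K -> Prop) (a : K) : Prop :=
  A a /\ exists b, lt b a /\ forall x, c a x -> ~ lt x b -> C x.

Lemma tails_in_pos (C : K -> Prop) : club K lt C -> ~ J (tails_in C).
Proof.
  intros HC HJC. apply (Hc_club C HC). apply (ideal_mono K lt J HJ _ (tails_in C)); [|exact HJC].
  intros a [Aa Hsub]. split; [exact Aa|].
  destruct (proj1 (Hlim a Aa)) as [b Hb]. exists b. auto.
Qed.

Lemma tails_in_mono (C C' : K -> Prop) :
  (forall x, C x -> C' x) -> forall a, tails_in C a -> tails_in C' a.
Proof. intros HC a [Aa [b [Hb Hx]]]. split; [exact Aa|]. exists b. auto. Qed.

Lemma tails_in_diff_bounded (C C' : K -> Prop) (beta : K) :
  (forall a, C a -> lt beta a -> C' a) ->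
  bounded K lt (fun a => tails_in C a /\ ~ tails_in C' a).
Proof.
  intros HCC'. destruct (no_max K lt Hk beta) as [y Hy].
  exists y. intros a [[Aa [b [Hb Hx]]] Hn].
  apply (swo_le_lt Hwo _ beta _); [|exact Hy]. intros Hba. apply Hn.
  destruct (proj2 (Hlim a Aa) beta Hba) as [z [_ [Hbz Hza]]].
  destruct (swo_max2 Hwo b z) as [m [Hm [Hmb Hmz]]].
  split; [exact Aa|]. exists m. split; [destruct Hm; subst; assumption|].
  intros x Hcx Hxm. apply HCC'.
  - apply Hx; [exact Hcx|]. intros Hxb. exact (Hxm (swo_lt_le Hwo _ _ _ Hxb Hmb)).
  - exact (swo_lt_le Hwo _ _ _ (swo_lt_le Hwo _ _ _ Hbz Hmz) Hxm).
Qed.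

Hypothesis Hsplit : forall B, ~ J B -> (forall a, B a -> A a) ->
  exists C, club K lt C /\ ~ J (fun a => ~ tails_in C a /\ B a).

Lemma shrink_club (G : K -> Prop) : club K lt G ->
  exists C, club K lt C /\ (forall x, C x -> G x) /\
    ~ J (fun a => tails_in G a /\ ~ tails_in C a).
Proof.
  intros HG.
  destruct (Hsplit (tails_in G) (tails_in_pos G HG) (fun a H => proj1 H)) as [Q [HQ HJQ]].
  exists (fun x => G x /\ Q x). split; [exact (club_inter K lt Hwo Hk G Q HG HQ)|].
  split; [intros x H; exact (proj1 H)|].
  intros HJGQ. apply HJQ. refine (ideal_mono K lt J HJ _ _ _ HJGQ).
  intros a [HnQ HGa]. split; [exact HGa|].
  intros HGQa. exact (HnQ (tails_in_mono _ Q (fun x H => proj2 H) a HGQa)).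
Qed.

Variables (D : Type) (ltD : D -> D -> Prop).
Hypothesis HbD : is_b_kappa K lt D ltD.

(* The guard [club K lt (r d)] lets a step exist for every history r, as [wf_choice] needs. *)
Definition tower_step (r : D -> K -> Prop) (e : D) (C : K -> Prop) : Prop :=
  club K lt C /\ exists G, club K lt G /\ (forall x, C x -> G x) /\
    ~ J (fun a => tails_in G a /\ ~ tails_in C a) /\
    forall d, ltD d e -> club K lt (r d) ->
      bounded K lt (fun a => tails_in G a /\ ~ tails_in (r d) a).

Lemma tower_step_exists (r : D -> K -> Prop) (e : D) : exists C, tower_step r e C.
Proof.
  destruct (dominating_function K lt Hk D ltD (fun d => point_above K lt (r d)) e HbD) as [g Hg].
  destruct (shrink_club _ (club_closure_points K lt Hwo Hk g)) as [C [HC [HCG HJC]]].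
  exists C. split; [exact HC|]. exists (closure_points K lt g).
  split; [exact (club_closure_points K lt Hwo Hk g)|].
  split; [exact HCG|]. split; [exact HJC|].
  intros d Hd Hrd.
  destruct (closure_points_eventually_sub K lt Hwo (r d) g Hrd (Hg d Hd)) as [beta Hbeta].
  exact (tails_in_diff_bounded _ _ beta Hbeta).
Qed.

Lemma tower_of_steps (F : D -> K -> Prop) : (forall e, tower_step F e (F e)) ->
  desc_tower K J (bounded K lt) D ltD (fun d => tails_in (F d)).
Proof.
  intros HF. split; [intros d; exact (tails_in_pos _ (proj1 (HF d)))|].
  intros d e Hde. destruct (HF e) as [_ [G [_ [HFG [HJG Hbd]]]]].
  pose proof (Hbd d Hde (proj1 (HF d))) as Hbnd.
  split; [|exact (ideal_pos_diff K lt J HJ _ _ _ HJG Hbnd)].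
  destruct Hbnd as [b Hb]. exists b. intros a [Hea Hda]. apply Hb.
  split; [exact (tails_in_mono _ _ HFG a Hea)|exact Hda].
Qed.

Lemma desc_tower_exists : exists T, desc_tower K J (bounded K lt) D ltD T.
Proof.
  destruct (wf_choice (swo_wf (proj1 HbD)) (fun _ : K => True) tower_step) as [F HF].
  - intros r r' e Hrr C [HC [G [HG [HCG [HJG Hbd]]]]].
    split; [exact HC|]. exists G. split; [exact HG|]. split; [exact HCG|]. split; [exact HJG|].
    intros d Hd. rewrite <- (Hrr d Hd). exact (Hbd d Hd).
  - exact tower_step_exists.
  - exists (fun d => tails_in (F d)). exact (tower_of_steps F HF).
Qed.

End Tower.

Theorem proposition5p4 (K : Type) (lt : K -> K -> Prop)
  (Hwo : strict_well_order lt)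
  (Hkappa : regular_uncountable_cardinal K lt)
  (theta rho : K)
  (Htheta : regular_infinite_cardinal K lt theta)
  (Hrho : regular_infinite_cardinal K lt rho)
  (Htr : lt theta rho)
  (J : (K -> Prop) -> Prop)
  (HJ : ideal K lt J) (HJc : kappa_complete K J)
  (HNS : NS_restr_sub K lt theta J)
  (Hnotower : forall (D : Type) (ltD : D -> D -> Prop), is_b_kappa K lt D ltD ->
      ~ exists A : D -> K -> Prop, desc_tower K J (bounded K lt) D ltD A)
  (A : K -> Prop)
  (HA : ~ J A)
  (HAsub : forall a, A a -> E_eq K lt theta a /\ acc K lt (E_ge K lt rho) a)
  (c : K -> K -> Prop)
  (Hc_sub : forall a, A a -> forall x, c a x -> E_ge K lt rho x /\ lt x a)
  (Hc_sup : forall a, A a -> forall b, lt b a -> exists x, c a x /\ lt b x)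
  (Hc_ot : forall a, A a -> order_type K lt (c a) theta)
  (Hc_club : forall C, club K lt C ->
      ~ J (fun a => A a /\ forall x, c a x -> C x)) :
  exists B : K -> Prop, ~ J B /\ (forall a, B a -> A a) /\
    forall C, club K lt C ->
      dual_restrict K J B
        (fun a => A a /\ exists b, lt b a /\ forall x, c a x -> ~ lt x b -> C x).
Proof.
  apply NNPP; intros Hno_B.
  assert (Hsplit : forall B, ~ J B -> (forall a, B a -> A a) ->
      exists C, club K lt C /\ ~ J (fun a => ~ tails_in K lt A c C a /\ B a)).
  { intros B HB HBA. apply NNPP; intros Hnone. apply Hno_B.
    exists B. split; [exact HB|]. split; [exact HBA|].
    intros C HC. apply NNPP; intros HnC. apply Hnone. exists C. split; [exact HC|exact HnC]. }
  assert (Hlim : forall a, A a -> acc K lt (fun _ => True) a)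
    by (intros a Aa; exact (proj1 (proj1 (HAsub a Aa)))).
  destruct (b_kappa_exists K lt (swo_irrefl Hwo)) as [D [ltD HbD]].
  apply (Hnotower D ltD HbD).
  exact (desc_tower_exists K lt Hwo Hkappa J A c HJ Hlim Hc_club Hsplit D ltD HbD).
Qed.
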